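(* Let $(H_i)_{i=0}^\infty = (2^{\alpha_i}3^{\beta_i})_{i=0}^\infty$ be the increasing enumeration of $\mathcal{H}=\{2^\alpha3^\beta : \alpha,\beta\in\mathbb{N}_0\}$, and define $f\colon\mathbb{N}_0\to\{+1,-1\}$ by $f(0)=+1$ and $f(n)=(-1)^{\alpha_i+\beta_i}$ for $n\in\{H_i,H_i+1,\dots,H_{i+1}-1\}$, $i\in\mathbb{N}_0$. Then there is no periodic sequence $\tilde f\colon\mathbb{N}_0\to\{+1,-1\}$ such that $f(n)=\tilde f(n)$ for almost all $n\in\mathbb{N}_0$.
   Context: $\mathbb{N}_0=\{0,1,2,\dots\}$. A property holds for almost all $n\in\mathbb{N}_0$ if the set of $n$ where it fails has upper density $\limsup_{N\to\infty}|\cdot\cap\{0,\dots,N-1\}|/N$ equal to $0$. *)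

From mathcomp Require Import all_boot all_order all_algebra.
Set Implicit Arguments. Unset Strict Implicit. Unset Printing Implicit Defensive.
Import Order.TTheory GRing.Theory Num.Theory.
Local Open Scope ring_scope.

(* Upper density of the set where P fails is 0:
   limsup_{N->oo} |{n < N | ~ P n}| / N = 0, written with an explicit epsilon
   (the counting ratios are nonnegative, so limsup = 0 iff they are eventually
   below every eps > 0). *)
Definition almost_all (P : pred nat) : Prop :=
  forall eps : rat, 0 < eps ->
    exists N0 : nat, forall N : nat, (N0 <= N)%N ->
      ((count (predC P) (iota 0 N))%:R : rat) <= eps * N%:R.

Definition periodic (ft : nat -> int) : Prop :=
  exists p : nat, (0 < p)%N /\ forall n, ft (n + p)%N = ft n.

From mathcomp Require Import all_boot all_order all_algebra.
From mathcomp Require Import zify.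
Import Order.TTheory GRing.Theory Num.Theory.

Set Implicit Arguments.
Unset Strict Implicit.

(* No power of
   3 lies in [4 3^c, 9 3^c), so there every 3-smooth number is even and the
   3-smooth number just below 2n is twice the one just below n; hence
   f(2n) = -f(n) whenever 2n lies in such a window.  If f agreed almost
   everywhere with ft of period p, then f(pk) = f(2pk) = ft(0) for a
   density-one set of k, and such a set meets every long enough dyadic
   interval, so some 2pk falls into a window, a contradiction. *)

Lemma logn2_pow23 a b : logn 2 (2 ^ a * 3 ^ b) = a.
Proof.
by rewrite lognM ?expn_gt0 // pfactorK // logn_coprime ?addn0 // coprimeXr.
Qed.

Lemma logn3_pow23 a b : logn 3 (2 ^ a * 3 ^ b) = b.
Proof. by rewrite lognM ?expn_gt0 // pfactorK // logn_coprime // coprimeXr. Qed.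

Lemma pow23_inj a b c d : 2 ^ a * 3 ^ b = 2 ^ c * 3 ^ d -> a = c /\ b = d.
Proof.
move=> E; split; first by rewrite -(logn2_pow23 a b) E logn2_pow23.
by rewrite -(logn3_pow23 a b) E logn3_pow23.
Qed.

Lemma pow3_notin_window b c : ~~ (4 * 3 ^ c <= 3 ^ b < 9 * 3 ^ c).
Proof.
rewrite negb_and -ltnNge -leqNgt; case: (leqP b c.+1) => hb; apply/orP.
  by left; apply: leq_ltn_trans (leq_pexp2l _ hb) _; rewrite // expnS ltn_mul2r expn_gt0.
by right; rewrite -[9]/(3 ^ 2) -expnD add2n leq_pexp2l.
Qed.

Lemma count_dilate (P : pred nat) m N : 0 < m ->
  count (fun k => P (m * k)) (iota 0 N) <= count P (iota 0 (m * N)).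
Proof.
move=> m_gt0; elim: N => [|N IH]; first by rewrite muln0.
rewrite mulnSr iotaD count_cat -addn1 iotaD count_cat /= !add0n addn0.
by apply: leq_add => //; rewrite -(prednK m_gt0) /= leq_addr.
Qed.

Section AlmostAll.

Local Open Scope ring_scope.

Lemma almost_allI (P Q : pred nat) :
  almost_all P -> almost_all Q -> almost_all (predI P Q).
Proof.
move=> aeP aeQ eps eps_gt0.
have [NP hP] := aeP (eps / 2) (divr_gt0 eps_gt0 (ltr0Sn _ 1)).
have [NQ hQ] := aeQ (eps / 2) (divr_gt0 eps_gt0 (ltr0Sn _ 1)).
exists (maxn NP NQ) => N; rewrite geq_max => /andP[/hP leP /hQ leQ].
apply: le_trans (_ : (count (predC P) (iota 0 N) + count (predC Q) (iota 0 N))%:R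
                       <= _); last by rewrite natrD (splitr eps) mulrDl lerD.
rewrite ler_nat -count_predUI; apply: leq_trans (leq_addr _ _).
by apply/eq_leq/eq_count => n /=; rewrite negb_and.
Qed.

Lemma almost_all_dilate (P : pred nat) m : (0 < m)%N ->
  almost_all P -> almost_all (fun k => P (m * k)%N).
Proof.
move=> m_gt0 aeP eps eps_gt0.
have m_gt0R : 0 < m%:R :> rat by rewrite ltr0n.
have m_neq0 : m%:R != 0 :> rat by rewrite gt_eqF.
have [N0 hN0] := aeP (eps / m%:R) (divr_gt0 eps_gt0 m_gt0R).
exists N0 => N le_N0N.
have := hN0 (m * N)%N (leq_trans le_N0N (leq_pmull _ m_gt0)).
rewrite natrM mulrA divfK // => /(le_trans _); apply.
by rewrite ler_nat count_dilate.
Qed.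

Lemma almost_all_exists_dyadic (P : pred nat) : almost_all P ->
  exists N0, forall N, (N0 <= N)%N -> exists2 k, P k & (N <= k < 2 * N)%N.
Proof.
move=> aeP; have third_gt0 : 0 < 3%:R^-1 :> rat by rewrite invr_gt0 ltr0Sn.
have [N0 hN0] := aeP _ third_gt0.
exists N0.+1 => N le_N0N.
have bad_few : (3 * count (predC P) (iota 0 (2 * N)) <= 2 * N)%N.
  have /hN0 : (N0 <= 2 * N)%N by lia.
  by rewrite ler_pdivlMl ?ltr0Sn // -natrM ler_nat.
have bad_sub : (count (predC P) (iota N N) <= count (predC P) (iota 0 (2 * N)))%N.
  by rewrite mul2n -addnn iotaD count_cat add0n leq_addl.
have good_pos : (0 < count P (iota N N))%N.
  by have := count_predC P (iota N N); rewrite size_iota; lia.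
move: good_pos; rewrite -has_count => /hasP[k]; rewrite mem_iota => k_range Pk.
by exists k; rewrite // addnn -mul2n in k_range.
Qed.

End AlmostAll.

Section SmoothBlocks.

Variables (H alpha beta : nat -> nat).
Hypothesis H_incr : forall i, H i < H i.+1.
Hypothesis H_onto : forall a b, exists i, H i = 2 ^ a * 3 ^ b.
Hypothesis H_exp : forall i, H i = 2 ^ alpha i * 3 ^ beta i.

Lemma leq_H : {mono H : i j / i <= j}.
Proof. exact/leq_mono/(homo_ltn ltn_trans H_incr). Qed.

Lemma ltn_H : {mono H : i j / i < j}.
Proof. by move=> i j; rewrite !ltnNge leq_H. Qed.

Lemma leq_block_start i n a b :
  H i <= n < H i.+1 -> 2 ^ a * 3 ^ b <= n -> 2 ^ a * 3 ^ b <= H i.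
Proof.
move=> /andP[_ lt_n] le_n; have [k Hk] := H_onto a b.
by rewrite -Hk leq_H -ltnS -ltn_H Hk (leq_ltn_trans le_n lt_n).
Qed.

Lemma exists_block n : 0 < n -> exists i, H i <= n < H i.+1.
Proof.
move=> n_gt0; have H0_le1 : H 0 <= 1.
  by have [k Hk] := H_onto 0 0; rewrite -[1]/(2 ^ 0 * 3 ^ 0) -Hk leq_H.
have H_ge i : i <= H i by elim: i => // i IH; apply: leq_ltn_trans IH (H_incr i).
suff: forall m, n < H m -> exists i, H i <= n < H i.+1 by apply; apply: H_ge.
elim=> [|m IH] lt_nHm; first by move: lt_nHm; rewrite ltnNge (leq_trans H0_le1).
by case: (ltnP n (H m)) => [/IH // | le_Hmn]; exists m; rewrite le_Hmn.
Qed.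

Lemma block_double c i j n : 4 * 3 ^ c <= 2 * n < 9 * 3 ^ c ->
  H i <= n < H i.+1 -> H j <= 2 * n < H j.+1 -> H j = 2 * H i.
Proof.
move=> /andP[lo hi] block_i block_j; apply/eqP; rewrite eqn_leq; apply/andP; split.
  have Hj_lo : 4 * 3 ^ c <= H j := leq_block_start (a := 2) block_j lo.
  have Hj_le : H j <= 2 * n by case/andP: block_j.
  have Hj_hi : H j < 9 * 3 ^ c := leq_ltn_trans Hj_le hi.
  move: (H_exp j) Hj_lo Hj_hi Hj_le; case: (alpha j) => [|a] ->.
    rewrite mul1n => Hj_lo Hj_hi.
    by have := pow3_notin_window (beta j) c; rewrite Hj_lo Hj_hi.
  rewrite !expnS -!mulnA !leq_mul2l /= => _ _; exact: leq_block_start.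
rewrite H_exp mulnA -expnS; apply: leq_block_start block_j _.
by rewrite expnS -mulnA -H_exp leq_mul2l; case/andP: block_i => ->.
Qed.

Variable f : nat -> int.
Hypothesis f_block : forall i n, H i <= n < H i.+1 -> f n = ((-1) ^+ (alpha i + beta i))%R.

Lemma f_double c n : 4 * 3 ^ c <= 2 * n < 9 * 3 ^ c -> f (2 * n) = (- f n)%R.
Proof.
move=> window; have n_gt0 : 0 < n.
  have : 0 < 3 ^ c by rewrite expn_gt0.
  by case/andP: window; lia.
have [i block_i] := exists_block n_gt0.
have [j block_j] : exists j, H j <= 2 * n < H j.+1 by apply: exists_block; lia.
rewrite (f_block block_i) (f_block block_j).
have := block_double window block_i block_j; rewrite !H_exp mulnA -expnS.
by move=> /pow23_inj[-> ->]; rewrite addSn exprS mulN1r.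
Qed.

End SmoothBlocks.

Lemma almost_all_pow3_window (P : pred nat) p : 0 < p -> almost_all P ->
  exists c k, P k /\ 4 * 3 ^ c <= 2 * (p * k) < 9 * 3 ^ c.
Proof.
move=> p_gt0 /almost_all_exists_dyadic[N0 hN0].
pose c := p * (N0 + 4); have lt_c_pow : c < 3 ^ c by apply: ltn_expl.
pose q := 2 * 3 ^ c %/ p.
have q_lo : q * p <= 2 * 3 ^ c by apply: leq_divM.
have q_hi : 2 * 3 ^ c < q.+1 * p by apply: ltn_ceil.
have [k Pk k_range] : exists2 k, P k & q.+1 <= k < 2 * q.+1 by apply: hN0; nia.
by exists c, k; split => //; apply/andP; split; nia.
Qed.

Local Open Scope ring_scope.

Theorem proposition4p4
  (H alpha beta : nat -> nat) (f : nat -> int)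
  (H_incr : forall i, (H i < H i.+1)%N)
  (H_range : forall m : nat, (exists i, H i = m) <-> exists a b : nat, m = (2 ^ a * 3 ^ b)%N)
  (H_exp : forall i, H i = (2 ^ alpha i * 3 ^ beta i)%N)
  (f0 : f 0%N = 1)
  (fH : forall i n : nat, (H i <= n < H i.+1)%N -> f n = (-1) ^+ (alpha i + beta i)) :
  ~ exists ft : nat -> int,
      (forall n, ft n = 1 \/ ft n = -1) /\ periodic ft /\
      almost_all (fun n => f n == ft n).
Proof.
move=> [ft [ft_sign [[p [p_gt0 ft_per]] ft_ae]]].
have H_onto a b : exists i, H i = (2 ^ a * 3 ^ b)%N by apply/H_range; exists a, b.
have ft_mulp k : ft (p * k)%N = ft 0%N.
  by elim: k => [|k IH]; rewrite ?muln0 // mulnSr ft_per.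
pose good_pair n := (f n == ft n) && (f (2 * n)%N == ft (2 * n)%N).
have good_pair_ae : almost_all (fun k => good_pair (p * k)%N).
  apply: (almost_all_dilate (P := good_pair) p_gt0).
  exact: almost_allI ft_ae (almost_all_dilate (m := 2) isT ft_ae).
have [c [k [/andP[/eqP f_pk /eqP f_2pk] window]]] :=
  almost_all_pow3_window p_gt0 good_pair_ae.
have := f_double H_incr H_onto H_exp fH window.
rewrite f_2pk f_pk mulnCA !ft_mulp.
by case: (ft_sign 0%N) => ->; rewrite ?opprK.
Qed.
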